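(* Under the standing assumption, let $S$ be a small tile with center $s$ and let $T$ be a big tile with center $s+t$ that properly touches $S$. Then the tiling contains a big tile with center $s-t$.
   Context: Standing assumption: let $n\ge 2$ and $0<p<q$ be real numbers. A tiling of $\mathbb{R}^n$ is a family of closed sets (tiles) whose union is $\mathbb{R}^n$ and whose pairwise intersections have Lebesgue measure zero. There are an invertible real $n\times n$ matrix $B$, an axis-parallel closed cube $S_0$ of side length $p$ and an axis-parallel closed cube $T_0$ of side length $q$ such that the family $\{S_0+Bz: z\in\mathbb{Z}^n\}\cup\{T_0+Bz: z\in\mathbb{Z}^n\}$ is a tiling of $\mathbb{R}^n$, and this tiling is unilateral, i.e. no two distinct tiles of the same side length share a full facet. Tiles of side length $p$ are called small, tiles of side length $q$ big. Two tiles touch if they intersect; they properly touch if their intersection has positive $(n-1)$-dimensional Lebesgue measure. *)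

From HB Require Import structures.
From mathcomp Require Import all_boot all_order all_algebra.
From mathcomp Require Import boolp classical_sets reals.
Set Implicit Arguments. Unset Strict Implicit. Unset Printing Implicit Defensive.
Import Order.TTheory GRing.Theory Num.Theory.
Local Open Scope ring_scope.
Local Open Scope classical_set_scope.

Section Tiles.
Variables (R : realType) (n : nat).

Definition cube (a : 'cV[R]_n) (l : R) : set 'cV[R]_n :=
  [set x | forall i : 'I_n, a i 0 <= x i 0 <= a i 0 + l].

Definition cube_center (a : 'cV[R]_n) (l : R) : 'cV[R]_n := a + const_mx (l / 2).

(* the intersection of two axis-parallel cubes is the box whose i-th side
   is [max (a i) (a' i), min (a i + l) (a' i + l')]; inter_len is its length
   (negative when the intersection is empty) *)
Definition inter_len (a : 'cV[R]_n) (l : R) (a' : 'cV[R]_n) (l' : R) (i : 'I_n) : R :=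
  Num.min (a i 0 + l) (a' i 0 + l') - Num.max (a i 0) (a' i 0).

(* n-dimensional Lebesgue measure of  cube a l `&` cube a' l'  *)
Definition inter_volume (a : 'cV[R]_n) (l : R) (a' : 'cV[R]_n) (l' : R) : R :=
  \prod_(i < n) Num.max 0 (inter_len a l a' l' i).

(* the intersection has positive (n-1)-dimensional Lebesgue (Hausdorff)
   measure: it is a nonempty box with at most one degenerate side *)
Definition properly_touch (a : 'cV[R]_n) (l : R) (a' : 'cV[R]_n) (l' : R) : Prop :=
  (forall i, 0 <= inter_len a l a' l' i) /\
  (forall i j, inter_len a l a' l' i = 0 -> inter_len a l a' l' j = 0 -> i = j).

Definition facet (a : 'cV[R]_n) (l : R) (i : 'I_n) (u : bool) : set 'cV[R]_n :=
  [set x | cube a l x /\ x i 0 = a i 0 + (if u then l else 0)].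

Definition share_full_facet (a : 'cV[R]_n) (l : R) (a' : 'cV[R]_n) (l' : R) : Prop :=
  exists i u i' u', facet a l i u = facet a' l' i' u'.

Definition is_tiling (I : Type) (c : I -> 'cV[R]_n) (s : I -> R) : Prop :=
  (forall x, exists k, cube (c k) (s k) x) /\
  (forall k k', cube (c k) (s k) <> cube (c k') (s k') ->
     inter_volume (c k) (s k) (c k') (s k') = 0).

Definition unilateral (I : Type) (c : I -> 'cV[R]_n) (s : I -> R) : Prop :=
  forall k k', s k = s k' -> cube (c k) (s k) <> cube (c k') (s k') ->
    ~ share_full_facet (c k) (s k) (c k') (s k').

Definition lat (B : 'M[R]_n) (z : 'cV[int]_n) : 'cV[R]_n :=
  B *m map_mx (fun k : int => k%:~R) z.

(* the family {S0 + Bz} u {T0 + Bz}: index (false, z) is the small tile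
   S0 + Bz (side p), index (true, z) the big tile T0 + Bz (side q) *)
Definition two_corner (B : 'M[R]_n) (S0 T0 : 'cV[R]_n) (k : bool * 'cV[int]_n)
  : 'cV[R]_n := (if k.1 then T0 else S0) + lat B k.2.

Definition two_side (p q : R) (k : bool * 'cV[int]_n) : R := if k.1 then q else p.

End Tiles.

From HB Require Import structures.
From mathcomp Require Import all_boot all_order all_algebra.
From mathcomp Require Import boolp classical_sets reals.
From mathcomp Require Import ring lra.
(* Let c be the centre of the big tile T and s that of the small tile S.  The
   corners of the big tiles form a coset of the translation group, so the point
   reflection x |-> 2c - x maps big tiles to big tiles.  Hence the small tile S'
   containing 2c - s is indeed small: a big tile there would reflect onto a big
   tile containing s.  If the centre of S' differed from 2c - s in coordinate i,
   take the mirror image of the centre of S' and move its i-th coordinate to a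
   point w just outside S but within q - p/2 of s.  The mirror image of w is
   interior to S', so w lies in no big tile, hence in a small tile other than S
   whose centre is closer than q to s; but two small centres differ by a
   translation separating two big tiles, i.e. by at least q in some coordinate.
   So S' is centred at 2c - s, whence 2(c - s) is a translation and
   s - (c - s) = c - 2(c - s) is the centre of a big tile. *)

Set Implicit Arguments. Unset Strict Implicit. Unset Printing Implicit Defensive.
Import Order.TTheory GRing.Theory Num.Theory.
Local Open Scope ring_scope.

Lemma exists_near_in_annulus (R : realFieldType) (s e r Q : R) :
  e != s -> `|e - s| <= r -> r < Q ->
  exists t, `|t - e| < r /\ r < `|t - s| < Q.
Proof.
move=> nes les rQ.
set m := Num.min `|e - s| (Q - r).
have m_gt0 : 0 < m by rewrite lt_min normr_gt0 subr_eq0 nes subr_gt0.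
have m_le_es : m <= `|e - s| by rewrite ge_min lexx.
have m_le_Qr : m <= Q - r by rewrite ge_min lexx orbT.
move: les m_le_es; case: (ltrgtP e s) nes => // hes _ les ?.
- exists (s - r - m / 2); split; first by rewrite ltr_distl; lra.
  by rewrite ltr0_norm; [apply/andP; split|]; lra.
- exists (s + r + m / 2); split; first by rewrite ltr_distl; lra.
  by rewrite gtr0_norm; [apply/andP; split|]; lra.
Qed.

Section Cubes.
Variables (R : realType) (n : nat).
Implicit Types (a x : 'cV[R]_n) (l : R).

Lemma cube_centerP a l x :
  cube a l x <-> forall i, `|x i 0 - cube_center a l i 0| <= l / 2.
Proof.
split=> hx i; move: (hx i); rewrite !mxE ?ler_distl => /andP[lo hi];
  apply/andP; split; lra.
Qed.

Lemma eq_cube a l a' l' (i : 'I_n) : 0 <= l -> 0 <= l' ->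
  cube a l = cube a' l' -> a i 0 = a' i 0 /\ l = l'.
Proof.
move=> l_ge0 l'_ge0 E.
have corners (b : 'cV[R]_n) (m : R) : 0 <= m -> cube b m b /\ cube b m (b + const_mx m).
  by move=> m_ge0; split=> k; rewrite ?mxE; apply/andP; split; lra.
have [ha hal] := corners a l l_ge0; have [ha' hal'] := corners a' l' l'_ge0.
rewrite E in ha hal; rewrite -E in ha' hal'.
move: (ha i) (hal i) (ha' i) (hal' i); rewrite !mxE.
by move=> /andP[? ?] /andP[? ?] /andP[? ?] /andP[? ?]; split; lra.
Qed.

Lemma inter_volume_neq0 a l a' l' x : 0 < l -> cube a l x ->
  (forall i, `|x i 0 - cube_center a' l' i 0| < l' / 2) ->
  inter_volume a l a' l' != 0.
Proof.
move=> l_gt0 hx hx'; apply/prodf_neq0 => i _.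
have len_gt0 : 0 < inter_len a l a' l' i.
  move: (hx i) (hx' i); rewrite /inter_len !mxE ltr_distl.
  move=> /andP[? ?] /andP[? ?].
  by rewrite subr_gt0 gt_max !lt_min; apply/andP; split; apply/andP; split; lra.
by rewrite max_r ?ltW // gt_eqF.
Qed.

Lemma inter_volume_eq0 a a' l :
  inter_volume a l a' l = 0 -> exists i, l <= `|a i 0 - a' i 0|.
Proof.
move=> /eqP/prodf_eq0[i _ /eqP len0]; exists i.
have : inter_len a l a' l i <= 0 by rewrite -len0 le_max lexx orbT.
rewrite /inter_len ler_normr.
by case: (leP (a i 0) (a' i 0)); case: (leP (a i 0 + l) (a' i 0 + l)) => ? ? ?;
  apply/orP; [right|left|right|left]; lra.
Qed.

End Cubes.

Section TwoCubeTiling.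
Variables (R : realType) (n : nat) (p q : R) (S0 T0 : 'cV[R]_n).
Variable L : {additive 'cV[int]_n -> 'cV[R]_n}.
Hypotheses (n_gt0 : (0 < n)%N) (p_gt0 : 0 < p) (p_lt_q : p < q).
Hypothesis tiling :
  is_tiling (fun k : bool * 'cV[int]_n => (if k.1 then T0 else S0) + L k.2)
            (two_side p q).

Local Notation small z := (S0 + L z).
Local Notation big z := (T0 + L z).
Local Notation small_center z := (cube_center (small z) p).
Local Notation big_center z := (cube_center (big z) q).

Let q_gt0 : 0 < q. Proof. exact: lt_trans p_lt_q. Qed.

Lemma small_or_big_tile x :
  (exists z, cube (small z) p x) \/ (exists z, cube (big z) q x).
Proof. by have [[[] z] hz] := tiling.1 x; [right|left]; exists z. Qed.

Lemma big_tile_misses_small_interior zb zs x : cube (big zb) q x ->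
  ~ (forall i, `|x i 0 - small_center zs i 0| < p / 2).
Proof.
move=> hx hint.
have neq : cube (big zb) q <> cube (small zs) p.
  move=> /(eq_cube (Ordinal n_gt0) (ltW q_gt0) (ltW p_gt0))[_ qp].
  by move: p_lt_q; rewrite qp ltxx.
by move: (tiling.2 (true, zb) (false, zs) neq); apply/eqP/inter_volume_neq0.
Qed.

Lemma small_centers_separated z1 z2 : small_center z1 != small_center z2 ->
  exists i, q <= `|small_center z1 i 0 - small_center z2 i 0|.
Proof.
move=> neq.
have neq' : cube (big z1) q <> cube (big z2) q.
  move=> E; move/eqP: neq; apply; apply/matrixP => i j; rewrite ord1.
  have [+ _] := eq_cube i (ltW q_gt0) (ltW q_gt0) E.
  by rewrite !mxE => /addrI ->.
have [i hi] := inter_volume_eq0 (tiling.2 (true, z1) (true, z2) neq').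
by exists i; move: hi; rewrite /= !mxE; congr (_ <= `|_|); ring.
Qed.

Lemma big_center_reflect zT z :
  big_center (zT + zT - z) = 2 *: big_center zT - big_center z.
Proof.
rewrite /cube_center raddfB raddfD.
by apply/matrixP => i j; rewrite !mxE; ring.
Qed.

Lemma big_tile_reflect zT z x : cube (big z) q x ->
  cube (big (zT + zT - z)) q (2 *: big_center zT - x).
Proof.
move=> /cube_centerP hx; apply/cube_centerP => i.
have -> : (2 *: big_center zT - x) i 0 - big_center (zT + zT - z) i 0
          = - (x i 0 - big_center z i 0).
  by rewrite big_center_reflect !mxE; ring.
by rewrite normrN.
Qed.

Lemma small_tile_at_reflection zT z w :
  (forall i, `|(2 *: big_center zT - w) i 0 - small_center z i 0| < p / 2) ->
  exists z', cube (small z') p w.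
Proof.
move=> hint; case: (small_or_big_tile w) => // -[zb /(big_tile_reflect zT) hw].
by case: (big_tile_misses_small_interior hw hint).
Qed.

Lemma small_tile_near zS z w : cube (small z) p w ->
  (forall i, `|w i 0 - small_center zS i 0| < q - p / 2) ->
  small_center z = small_center zS.
Proof.
move=> /cube_centerP hw near; apply/eqP; apply: contraT => /small_centers_separated[i far].
have := ler_distD (w i 0) (small_center z i 0) (small_center zS i 0).
by rewrite (distrC _ (w i 0)); move: (hw i) (near i) far; lra.
Qed.

Lemma small_tile_reflected zT zS z :
  cube (small z) p (2 *: big_center zT - small_center zS) ->
  small_center z = 2 *: big_center zT - small_center zS.
Proof.
move=> /cube_centerP hz; apply/matrixP => i j; rewrite ord1; apply/eqP.
apply: contraT => ne.
have half_p_lt : p / 2 < q - p / 2 by move: p_lt_q; lra.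
pose e := (2 *: big_center zT - small_center z) i 0.
have [t [te ts]] : exists t, `|t - e| < p / 2 /\
    p / 2 < `|t - small_center zS i 0| < q - p / 2.
  apply: exists_near_in_annulus; last exact: half_p_lt.
  - by move: ne; apply: contra; rewrite /e !mxE => /eqP E; apply/eqP; lra.
  - by move: (hz i); rewrite /e !mxE !ler_distl => /andP[? ?]; apply/andP; split; lra.
(* w mirrors the centre of tile z through the centre of tile zT, except that
   its i-th coordinate is moved to t, just outside the small tile zS *)
pose w := \col_k (if k == i then t else (2 *: big_center zT - small_center z) k 0).
have [z' hw] : exists z', cube (small z') p w.
  apply: (small_tile_at_reflection (zT := zT) (z := z)) => k; rewrite !mxE.
  case: eqP => [->|_]; last by rewrite ltr_distl; apply/andP; split; move: p_gt0; lra.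
  by move: te; rewrite /e !mxE !ltr_distl => /andP[? ?]; apply/andP; split; lra.
have z'_eq : small_center z' = small_center zS.
  apply: (small_tile_near hw) => k; rewrite mxE.
  case: eqP => [->|_]; first by case/andP: ts.
  by move: (hz k); rewrite !mxE ler_distl ltr_distl => /andP[? ?]; apply/andP; split; lra.
move/cube_centerP: hw => /(_ i); rewrite z'_eq mxE eqxx.
by case/andP: ts; lra.
Qed.

Lemma big_center_opposite zS zT : exists z,
  big_center z = small_center zS - (big_center zT - small_center zS).
Proof.
have [z /small_tile_reflected hz] :
    exists z, cube (small z) p (2 *: big_center zT - small_center zS).
  apply: (small_tile_at_reflection (zT := zT) (z := zS)) => i.
  by rewrite subKr subrr normr0 divr_gt0.
exists (zT - z + zS); apply/matrixP => i j.
by move/matrixP/(_ i j): hz; rewrite !mxE raddfD raddfB !mxE; lra.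
Qed.

End TwoCubeTiling.

Fact lat_is_nmod_morphism (R : realType) (n : nat) (B : 'M[R]_n) :
  nmod_morphism (lat B).
Proof.
rewrite /lat; split=> [|u v]; first by rewrite raddf0 mulmx0.
by rewrite -mulmxDr raddfD.
Qed.

HB.instance Definition _ (R : realType) (n : nat) (B : 'M[R]_n) :=
  GRing.isNmodMorphism.Build _ _ (lat B) (lat_is_nmod_morphism B).

Theorem lemma5 (R : realType) (n : nat) (p q : R) (B : 'M[R]_n) (S0 T0 : 'cV[R]_n) :
  (2 <= n)%N -> 0 < p -> p < q -> B \in unitmx ->
  is_tiling (two_corner B S0 T0) (two_side p q) ->
  unilateral (two_corner B S0 T0) (two_side p q) ->
  forall zS zT : 'cV[int]_n,
    let s := cube_center (S0 + lat B zS) p in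
    let t := cube_center (T0 + lat B zT) q - s in
    properly_touch (S0 + lat B zS) p (T0 + lat B zT) q ->
    exists z : 'cV[int]_n, cube_center (T0 + lat B z) q = s - t.
Proof.
move=> n_ge2 p_gt0 p_lt_q _ tiling _ zS zT s t _.
exact: (big_center_opposite (L := lat B) (ltnW n_ge2) p_gt0 p_lt_q tiling).
Qed.
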